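(* Let $w\in\mathbb{R}^n$ with $w\ge0$, $W=ww^\top$, and integers $p,q\in\{1,\dots,n\}$, $r=pq$. Then the optimal value of the linear program $$\max\ \sum_{i=1}^n\sum_{j=1}^n W_{ij}t_{ij}\ \text{ s.t. }\ \sum_{j=1}^n t_{ij}\le q\ (\forall i),\ \sum_{i=1}^n t_{ij}\le p\ (\forall j),\ \sum_{i,j}t_{ij}\le r,\ 0\le t_{ij}\le1\ (\forall i,j)$$ equals $\sum_{i=1}^p\sum_{j=1}^q w_{[i]}w_{[j]}$.
   Context: $w_{[i]}$ denotes the $i$-th largest entry of $w$. *)

From HB Require Import structures.
From mathcomp Require Import all_boot all_order all_algebra.
Set Implicit Arguments. Unset Strict Implicit. Unset Printing Implicit Defensive.
Import Order.TTheory GRing.Theory Num.Theory.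
Local Open Scope ring_scope.

(* Entries of w sorted in nonincreasing order; wdesc w k = w_{[k+1]} (0-indexed). *)
Definition wdesc (R : realFieldType) (n : nat) (w : 'cV[R]_n) (k : nat) : R :=
  nth 0 (sort (fun x y : R => y <= x) [seq w i 0 | i <- enum 'I_n]) k.

Definition lp_feasible (R : realFieldType) (n p q : nat) (t : 'M[R]_n) : Prop :=
  [/\ forall i : 'I_n, \sum_(j < n) t i j <= q%:R,
      forall j : 'I_n, \sum_(i < n) t i j <= p%:R,
      \sum_(i < n) \sum_(j < n) t i j <= (p * q)%N%:R &
      forall i j : 'I_n, 0 <= t i j <= 1].

Definition lp_objective (R : realFieldType) (n : nat) (W t : 'M[R]_n) : R :=
  \sum_(i < n) \sum_(j < n) W i j * t i j.

From HB Require Import structures.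
From mathcomp Require Import all_boot all_order all_algebra all_fingroup.
From mathcomp Require Import ring lra.
Set Implicit Arguments. Unset Strict Implicit. Unset Printing Implicit Defensive.
Import Order.TTheory GRing.Theory Num.Theory.
Local Open Scope ring_scope.

(* Since W = w w^T, the objective is sum_i w_i (sum_j w_j t_ij).  A "bathtub"
   bound -- for weights 0 <= x_i <= c of total mass at most k c, sum_i w_i x_i
   is at most c times the sum of the k largest entries of w -- applied first to
   each row (c = 1, k = q) and then to the row values (c = sum of the q largest
   entries, k = p) gives the upper bound.  It is attained by the 0/1 matrix
   supported on the rows of the p largest and the columns of the q largest
   entries of w. *)

Lemma mulr_le_max_sub (R : realDomainType) (a m x c : R) :
  0 <= m -> 0 <= x <= c -> a * x <= c * Num.max (a - m) 0 + m * x.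
Proof. by move=> hm /andP[hx0 hxc]; case: (lerP 0 (a - m)) => h; nra. Qed.

Lemma sum_perm_prefix (R : realFieldType) (n m : nat) (s : 'S_n) (f : nat -> R) :
  (m <= n)%N -> \sum_(i < n) f (s i) * (s i < m)%:R = \sum_(l < m) f l.
Proof.
move=> hmn; rewrite (reindex_inj (@perm_inj _ s^-1)) /=.
under eq_bigr do rewrite permKV.
rewrite (eq_bigr (fun l : 'I_n => if (l < m)%N then f l else 0)); last first.
  by move=> l _; case: ifP; rewrite ?mulr1 ?mulr0.
by rewrite -big_mkcond (big_ord_narrow hmn).
Qed.

Section SortedEntries.
Variables (R : realFieldType) (n : nat) (w : 'cV[R]_n).

Let ws := sort (fun x y : R => y <= x) [seq w i 0 | i <- enum 'I_n].

Lemma wdesc_le (i j : nat) : (i <= j)%N -> (j < n)%N -> wdesc w j <= wdesc w i.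
Proof.
move=> hij hj; apply: (sorted_leq_nth (leT := fun x y : R => y <= x)) => //.
- by move=> x y z /= h1 h2; exact: le_trans h2 h1.
- by apply: sort_sorted => x y; exact: le_total.
- by rewrite inE size_sort size_map size_enum_ord (leq_ltn_trans hij hj).
- by rewrite inE size_sort size_map size_enum_ord.
Qed.

Lemma wdesc_rank : exists r : 'S_n, forall i, w i 0 = wdesc w (r i).
Proof.
have : perm_eq ws [tuple w i 0 | i < n] by rewrite perm_sort /= enumT unlock.
case/tuple_permP => s hs; exists s^-1%g => i.
rewrite /wdesc -/ws hs -(tnth_nth 0 [tuple _ | i < n] (s^-1%g i)).
by rewrite !tnth_mktuple permKV.
Qed.

Lemma sum_col_wdesc (f : R -> R) :
  \sum_(i < n) f (w i 0) = \sum_(0 <= j < n) f (wdesc w j).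
Proof.
have [r hr] := wdesc_rank; under eq_bigr do rewrite hr.
by rewrite (reindex_inj (@perm_inj _ r^-1)) /= big_mkord; under eq_bigr do rewrite permKV.
Qed.

Hypothesis hw : forall i : 'I_n, 0 <= w i 0.

Lemma wdesc_ge0 (j : nat) : 0 <= wdesc w j.
Proof.
rewrite /wdesc -/ws; case: (ltnP j (size ws)) => hj; last by rewrite nth_default.
have := mem_nth 0 hj; rewrite mem_sort => /mapP [i _ ->].
exact: hw.
Qed.

Lemma sum_max_sub_wdesc (k : nat) : (k < n)%N ->
  \sum_(i < n) Num.max (w i 0 - wdesc w k) 0 =
  \sum_(j < k.+1) (wdesc w j - wdesc w k).
Proof.
move=> hk; rewrite (sum_col_wdesc (fun y => Num.max (y - wdesc w k) 0)).
rewrite (big_cat_nat (leq0n k.+1) hk) /= [X in _ + X]big_nat_cond.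
rewrite [X in _ + X]big1 ?addr0 ?big_mkord; last first.
  move=> j /andP[/andP[hkj hjn] _].
  by apply/max_idPr; rewrite subr_le0 wdesc_le // ltnW.
by apply: eq_bigr => j _; apply/max_idPl; rewrite subr_ge0 wdesc_le // -ltnS.
Qed.

(* Lower each w_i to the threshold m := w_[k]: the excess over m is paid at
   most c per entry, and only the k largest entries have an excess. *)
Lemma sum_mul_le_prefix (k : nat) (c : R) (x : 'I_n -> R) :
  (k <= n)%N -> (forall i, 0 <= x i <= c) -> \sum_i x i <= k%:R * c ->
  \sum_i w i 0 * x i <= c * \sum_(j < k) wdesc w j.
Proof.
case: k => [|k] hk hx hs.
  have hx0 : \sum_i x i = 0.
    by apply/eqP; rewrite eq_le -{2}(mul0r c) hs sumr_ge0 // => i _; case/andP: (hx i).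
  rewrite big_ord0 mulr0 big1 // => i _.
  by rewrite (psumr_eq0P _ hx0) ?mulr0 // => j _; case/andP: (hx j).
set m := wdesc w k; have hm : 0 <= m := wdesc_ge0 k.
have hc : 0 <= c by case/andP: (hx (Ordinal hk)) => h0 h1; exact: le_trans h1.
have hpt i : w i 0 * x i <= c * Num.max (w i 0 - m) 0 + m * x i.
  exact: mulr_le_max_sub.
apply: le_trans (ler_sum _ (fun i _ => hpt i)) _.
rewrite big_split /= -!mulr_sumr sum_max_sub_wdesc // big_split /=.
rewrite sumr_const card_ord mulNrn -mulr_natr -/m.
have : m * \sum_i x i <= m * (k.+1%:R * c) by exact: ler_wpM2l.
nra.
Qed.

End SortedEntries.

Section RankOneLP.
Variables (R : realFieldType) (n : nat) (w : 'cV[R]_n) (p q : nat).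
Hypotheses (hw : forall i : 'I_n, 0 <= w i 0) (hpn : (p <= n)%N) (hqn : (q <= n)%N).

Let S := \sum_(i < p) \sum_(j < q) wdesc w i * wdesc w j.

Lemma lp_objective_rank1 (t : 'M[R]_n) :
  lp_objective (w *m w^T) t = \sum_i w i 0 * \sum_j w j 0 * t i j.
Proof.
apply: eq_bigr => i _; rewrite mulr_sumr; apply: eq_bigr => j _.
by rewrite !mxE big_ord1 !mxE mulrA.
Qed.

Lemma lp_value_factor : S = (\sum_(i < p) wdesc w i) * \sum_(j < q) wdesc w j.
Proof. by rewrite /S mulr_suml; apply: eq_bigr => i _; rewrite mulr_sumr. Qed.

Lemma lp_objective_le (t : 'M[R]_n) : lp_feasible p q t ->
  lp_objective (w *m w^T) t <= S.
Proof.
case=> hrow hcol htot hb.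
have ht0 i j : 0 <= t i j by case/andP: (hb i j).
have hrowv i : 0 <= \sum_j w j 0 * t i j <= \sum_(j < q) wdesc w j.
  rewrite sumr_ge0 => [|j _]; last exact: mulr_ge0.
  rewrite -[X in _ <= X]mul1r; apply: sum_mul_le_prefix => //.
  by rewrite mulr1.
rewrite lp_objective_rank1 lp_value_factor mulrC; apply: sum_mul_le_prefix => //.
rewrite exchange_big /=.
under eq_bigr do rewrite -mulr_sumr.
apply: sum_mul_le_prefix => // [j|].
  by rewrite hcol andbT sumr_ge0.
by rewrite exchange_big /= -natrM mulnC.
Qed.

Lemma lp_optimum_attained :
  exists2 t : 'M[R]_n, lp_feasible p q t & lp_objective (w *m w^T) t = S.
Proof.
have [r hr] := wdesc_rank w.
have hcount m : (m <= n)%N -> \sum_(i < n) (r i < m)%:R = m%:R :> R.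
  move=> hm; have := sum_perm_prefix r (fun=> 1 : R) hm.
  by rewrite sumr_const card_ord => <-; apply: eq_bigr => i _; rewrite mul1r.
have hb01 (b : bool) : 0 <= (b%:R : R) <= 1 by case: b; rewrite /= ?lexx ?ler01.
pose t : 'M[R]_n := \matrix_(i, j) ((r i < p)%:R * (r j < q)%:R).
have hrow i : \sum_j t i j = (r i < p)%:R * q%:R.
  by rewrite -(hcount q) // mulr_sumr; apply: eq_bigr => j _; rewrite mxE.
have hcol j : \sum_i t i j = p%:R * (r j < q)%:R.
  by rewrite -(hcount p) // mulr_suml; apply: eq_bigr => i _; rewrite mxE.
exists t; first split.
- by move=> i; rewrite hrow; have := hb01 (r i < p)%N; have := ler0n R q; nra.
- by move=> j; rewrite hcol; have := hb01 (r j < q)%N; have := ler0n R p; nra.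
- under eq_bigr do rewrite hrow.
  by rewrite -mulr_suml hcount // natrM.
- by move=> i j; rewrite mxE; have := hb01 (r i < p)%N; have := hb01 (r j < q)%N; nra.
rewrite lp_objective_rank1 lp_value_factor.
rewrite -(sum_perm_prefix r (wdesc w) hpn) -(sum_perm_prefix r (wdesc w) hqn).
rewrite mulr_suml; apply: eq_bigr => i _; rewrite hr -mulrA; congr (_ * _).
by rewrite mulr_sumr; apply: eq_bigr => j _; rewrite !mxE hr; ring.
Qed.

End RankOneLP.

Theorem mainTheorem18 (R : realFieldType) (n : nat) (w : 'cV[R]_n)
    (hw : forall i : 'I_n, 0 <= w i 0) (p q : nat)
    (hp : (1 <= p <= n)%N) (hq : (1 <= q <= n)%N) :
  let W := w *m w^T in
  let S := \sum_(i < p) \sum_(j < q) wdesc w i * wdesc w j in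
  (forall t : 'M[R]_n, lp_feasible p q t -> lp_objective W t <= S) /\
  (exists2 t : 'M[R]_n, lp_feasible p q t & lp_objective W t = S).
Proof.
move: hp hq => /andP[_ hpn] /andP[_ hqn] W S; split.
- exact: lp_objective_le.
- exact: lp_optimum_attained.
Qed.
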